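(* Let $\{(\Gamma_t,\theta_t)\}_{t\in[0,\underline t)}$ solve the framed curvature flow and let $A_p(\Gamma_t):=\frac12\int_{\Gamma_t}\gamma\times\partial_s\gamma\,ds\in\mathbb{R}^3$. Then $$\frac{d}{dt}A_p(\Gamma_t)=-\int_{\Gamma_t}\kappa\,\beta_\theta\,ds .$$
   Context: $S^1=\mathbb{R}/2\pi\mathbb{Z}$; closed curves $\Gamma_t$ parametrized by $\gamma(t,\cdot):S^1\to\mathbb{R}^3$, $g=\|\partial_u\gamma\|$, $ds=g\,du$, $\partial_s=g^{-1}\partial_u$; Frenet frame $T,N,B$, curvature $\kappa$; angle function $\theta$, $\theta$-normal $\nu_\theta=\cos\theta N+\sin\theta B$, $\theta$-binormal $\beta_\theta=-\sin\theta N+\cos\theta B=T\times\nu_\theta$. Framed curvature flow: $\partial_t\gamma=\kappa\nu_\theta$, $\partial_t\theta=\upsilon_\theta$. *)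

From Stdlib Require Import Reals.
From Coquelicot Require Import Coquelicot.
Open Scope R_scope.

Definition V3 : Type := (R * R * R)%type.
Definition vx (v : V3) : R := fst (fst v).
Definition vy (v : V3) : R := snd (fst v).
Definition vz (v : V3) : R := snd v.
Definition mkV (x y z : R) : V3 := (x, y, z).
Definition vadd (v w : V3) : V3 := mkV (vx v + vx w) (vy v + vy w) (vz v + vz w).
Definition vscal (a : R) (v : V3) : V3 := mkV (a * vx v) (a * vy v) (a * vz v).
Definition vopp (v : V3) : V3 := vscal (-1) v.
Definition vdot (v w : V3) : R := vx v * vx w + vy v * vy w + vz v * vz w.
Definition vnorm (v : V3) : R := sqrt (vdot v v).
Definition cross (v w : V3) : V3 :=
  mkV (vy v * vz w - vz v * vy w)
      (vz v * vx w - vx v * vz w)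
      (vx v * vy w - vy v * vx w).

Definition pt (f : R -> R -> R) (t u : R) : R := Derive (fun s => f s u) t.
Definition pu (f : R -> R -> R) (t u : R) : R := Derive (fun v => f t v) u.

Definition vpt (F : R -> R -> V3) (t u : R) : V3 :=
  mkV (pt (fun a b => vx (F a b)) t u) (pt (fun a b => vy (F a b)) t u)
      (pt (fun a b => vz (F a b)) t u).
Definition vpu (F : R -> R -> V3) (t u : R) : V3 :=
  mkV (pu (fun a b => vx (F a b)) t u) (pu (fun a b => vy (F a b)) t u)
      (pu (fun a b => vz (F a b)) t u).

Fixpoint Ck_on (D : R -> Prop) (k : nat) (f : R -> R -> R) : Prop :=
  (forall t u, D t -> continuous (fun p : R * R => f (fst p) (snd p)) (t, u)) /\
  match k with
  | O => True
  | S k' =>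
      (forall t u, D t -> ex_derive (fun s => f s u) t /\ ex_derive (fun v => f t v) u)
      /\ Ck_on D k' (pt f) /\ Ck_on D k' (pu f)
  end.

Definition smooth_on (D : R -> Prop) (f : R -> R -> R) : Prop := forall k, Ck_on D k f.
Definition vsmooth_on (D : R -> Prop) (F : R -> R -> V3) : Prop :=
  smooth_on D (fun a b => vx (F a b)) /\ smooth_on D (fun a b => vy (F a b)) /\
  smooth_on D (fun a b => vz (F a b)).

Section Geometry.
Variable gamma : R -> R -> V3.

Definition speed (t u : R) : R := vnorm (vpu gamma t u).
(* unit tangent T = d_s gamma = g^-1 d_u gamma *)
Definition tangent (t u : R) : V3 := vscal (/ speed t u) (vpu gamma t u).
Definition ds_tangent (t u : R) : V3 := vscal (/ speed t u) (vpu tangent t u).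
Definition curvature (t u : R) : R := vnorm (ds_tangent t u).
Definition fnormal (t u : R) : V3 := vscal (/ curvature t u) (ds_tangent t u).
Definition fbinormal (t u : R) : V3 := cross (tangent t u) (fnormal t u).

Variable theta : R -> R -> R.
Definition theta_normal (t u : R) : V3 :=
  vadd (vscal (cos (theta t u)) (fnormal t u)) (vscal (sin (theta t u)) (fbinormal t u)).
Definition theta_binormal (t u : R) : V3 :=
  vadd (vscal (- sin (theta t u)) (fnormal t u)) (vscal (cos (theta t u)) (fbinormal t u)).
End Geometry.

Definition vRInt (F : R -> V3) (a b : R) : V3 :=
  mkV (RInt (fun u => vx (F u)) a b) (RInt (fun u => vy (F u)) a b)
      (RInt (fun u => vz (F u)) a b).

(** A_p(Gamma_t) = 1/2 \int_{Gamma_t} gamma x d_s gamma ds, ds = g du. *)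
Definition Ap (gamma : R -> R -> V3) (t : R) : V3 :=
  vscal (1/2) (vRInt (fun u => vscal (speed gamma t u) (cross (gamma t u) (tangent gamma t u)))
                     0 (2 * PI)).

Definition vis_derive (F : R -> V3) (t : R) (L : V3) : Prop :=
  is_derive (fun s => vx (F s)) t (vx L) /\ is_derive (fun s => vy (F s)) t (vy L) /\
  is_derive (fun s => vz (F s)) t (vz L).

(* Since [g T = d_u gamma], the x-component of [A_p] is [1/2 \int (f g_u - g f_u) du] for the
   coordinates [f = gamma_y], [g = gamma_z] (cyclically for the others). Differentiating under the
   integral sign, the mixed terms [f g_ut] and [g f_ut] are integrated by parts over the closed
   curve (after Schwarz), which doubles the remaining terms: [d/dt A_p = \int gamma_t x gamma_u du].
   Along the flow [gamma_t x gamma_u = kappa g (nu_theta x T) = - kappa g beta_theta], because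
   [T x nu_theta = beta_theta] as soon as [N] is orthogonal to the unit vector [T]. *)

From Stdlib Require Import Reals Lra.
From Coquelicot Require Import Coquelicot.
Open Scope R_scope.

Lemma V3_ext (v w : V3) : vx v = vx w -> vy v = vy w -> vz v = vz w -> v = w.
Proof.
  destruct v as [[v1 v2] v3], w as [[w1 w2] w3]; unfold vx, vy, vz; simpl.
  intros -> -> ->; reflexivity.
Qed.

Lemma vopp_involutive (v : V3) : vopp (vopp v) = v.
Proof. apply V3_ext; unfold vopp, vscal, mkV, vx, vy, vz; simpl; ring. Qed.

Lemma cross_scal_anticomm (a b : R) (v w : V3) :
  cross (vscal a v) (vscal b w) = vopp (vscal b (vscal a (cross w v))).
Proof. apply V3_ext; unfold vopp, vscal, cross, mkV, vx, vy, vz; simpl; ring. Qed.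

Lemma cross_vadd_r (a b c : V3) : cross a (vadd b c) = vadd (cross a b) (cross a c).
Proof. apply V3_ext; unfold vadd, cross, mkV, vx, vy, vz; simpl; ring. Qed.

Lemma cross_vscal_r (a b : V3) (k : R) : cross a (vscal k b) = vscal k (cross a b).
Proof. apply V3_ext; unfold vscal, cross, mkV, vx, vy, vz; simpl; ring. Qed.

Lemma cross_cross (a b c : V3) :
  cross a (cross b c) = vadd (vscal (vdot a c) b) (vscal (- vdot a b) c).
Proof. apply V3_ext; unfold vdot, vadd, vscal, cross, mkV, vx, vy, vz; simpl; ring. Qed.

Lemma cross_rotated_frame (T n : V3) (c s : R) :
  vdot T T = 1 -> vdot n T = 0 ->
  cross T (vadd (vscal c n) (vscal s (cross T n))) =
  vadd (vscal (- s) n) (vscal c (cross T n)).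
Proof.
  intros HT Hn.
  assert (HTn : vdot T n = 0) by (rewrite <- Hn; unfold vdot; ring).
  rewrite cross_vadd_r, !cross_vscal_r, cross_cross, HT, HTn.
  apply V3_ext; unfold vadd, vscal, mkV, vx, vy, vz; simpl; ring.
Qed.

Definition vex_derive_u (F : R -> R -> V3) (t u : R) : Prop :=
  ex_derive (fun v => vx (F t v)) u /\ ex_derive (fun v => vy (F t v)) u /\
  ex_derive (fun v => vz (F t v)) u.

Lemma vdot_vpu_unit (F : R -> R -> V3) (t u : R) :
  (forall v, vdot (F t v) (F t v) = 1) -> vex_derive_u F t u ->
  vdot (vpu F t u) (F t u) = 0.
Proof.
  intros Hunit (Hx & Hy & Hz).
  assert (H0 : is_derive (fun v => vdot (F t v) (F t v)) u 0).
  { apply (is_derive_ext (fun _ => 1)); [intro v; symmetry; apply Hunit | auto_derive; auto]. }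
  assert (H2 : is_derive (fun v => vdot (F t v) (F t v)) u (2 * vdot (vpu F t u) (F t u))).
  { set (x := fun v => vx (F t v)) in Hx. set (y := fun v => vy (F t v)) in Hy.
    set (z := fun v => vz (F t v)) in Hz.
    change (is_derive (fun v => x v * x v + y v * y v + z v * z v) u
      (2 * (Derive x u * x u + Derive y u * y u + Derive z u * z u))).
    auto_derive; [repeat split; assumption | unfold x, y, z; cbv beta; ring]. }
  apply is_derive_unique in H0; apply is_derive_unique in H2. lra.
Qed.

Lemma vdot_pos_of_vnorm_pos (w : V3) : 0 < vnorm w -> 0 < vdot w w.
Proof.
  unfold vnorm. intro Hw.
  destruct (Rle_or_lt (vdot w w) 0) as [Hle|]; [|assumption].
  rewrite (sqrt_neg_0 _ Hle) in Hw. lra.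
Qed.

Lemma vdot_normalize (w : V3) :
  0 < vnorm w -> vdot (vscal (/ vnorm w) w) (vscal (/ vnorm w) w) = 1.
Proof.
  intro Hw. generalize (vdot_pos_of_vnorm_pos w Hw). unfold vnorm in *. intro Hpos.
  replace (vdot (vscal (/ sqrt (vdot w w)) w) (vscal (/ sqrt (vdot w w)) w))
    with (/ sqrt (vdot w w) * / sqrt (vdot w w) * vdot w w)
    by (unfold vdot, vscal, mkV, vx, vy, vz; simpl; ring).
  rewrite <- (sqrt_sqrt (vdot w w)) at 3 by lra. field. lra.
Qed.

Section Frame.

Variables (gamma : R -> R -> V3) (theta : R -> R -> R) (t u : R).
Hypothesis speed_pos : forall v, 0 < speed gamma t v.
Hypothesis vpu_differentiable : vex_derive_u (vpu gamma) t u.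

Lemma vpu_eq_speed_tangent : vpu gamma t u = vscal (speed gamma t u) (tangent gamma t u).
Proof.
  generalize (speed_pos u); intro Hs.
  apply V3_ext; unfold tangent, vscal, mkV, vx, vy, vz; simpl; field; lra.
Qed.

Lemma vex_derive_u_tangent : vex_derive_u (tangent gamma) t u.
Proof.
  destruct vpu_differentiable as (Hx & Hy & Hz).
  generalize (vdot_pos_of_vnorm_pos _ (speed_pos u)); intro Hpos.
  unfold tangent, speed, vnorm.
  set (x := fun v => vx (vpu gamma t v)) in *. set (y := fun v => vy (vpu gamma t v)) in *.
  set (z := fun v => vz (vpu gamma t v)) in *.
  assert (Hd : forall p : R -> R, ex_derive p u ->
    ex_derive (fun v => / sqrt (x v * x v + y v * y v + z v * z v) * p v) u).
  { intros p Hp. auto_derive; repeat split; try assumption.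
    apply Rgt_not_eq, sqrt_lt_R0, Hpos. }
  split; [|split]; apply Hd; assumption.
Qed.

Lemma ds_tangent_orth_tangent : vdot (ds_tangent gamma t u) (tangent gamma t u) = 0.
Proof.
  transitivity (/ speed gamma t u * vdot (vpu (tangent gamma) t u) (tangent gamma t u)).
  - unfold ds_tangent, vdot, vscal, mkV, vx, vy, vz; simpl; ring.
  - rewrite (vdot_vpu_unit (tangent gamma) t u); [ring| |exact vex_derive_u_tangent].
    intro v. exact (vdot_normalize _ (speed_pos v)).
Qed.

Lemma cross_tangent_theta_normal :
  cross (tangent gamma t u) (theta_normal gamma theta t u) = theta_binormal gamma theta t u.
Proof.
  apply cross_rotated_frame.
  - exact (vdot_normalize _ (speed_pos u)).
  - transitivity (/ curvature gamma t u * vdot (ds_tangent gamma t u) (tangent gamma t u)).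
    + unfold fnormal, vdot, vscal, mkV, vx, vy, vz; simpl; ring.
    + rewrite ds_tangent_orth_tangent; ring.
Qed.

Lemma cross_vpt_vpu_framed :
  vpt gamma t u = vscal (curvature gamma t u) (theta_normal gamma theta t u) ->
  cross (vpt gamma t u) (vpu gamma t u) =
  vopp (vscal (speed gamma t u) (vscal (curvature gamma t u) (theta_binormal gamma theta t u))).
Proof.
  intro Hflow.
  rewrite Hflow, vpu_eq_speed_tangent, cross_scal_anticomm, cross_tangent_theta_normal.
  reflexivity.
Qed.

End Frame.

Definition vex_RInt (F : R -> V3) (a b : R) : Prop :=
  ex_RInt (fun u => vx (F u)) a b /\ ex_RInt (fun u => vy (F u)) a b /\
  ex_RInt (fun u => vz (F u)) a b.

Lemma vRInt_ext (F G : R -> V3) (a b : R) : (forall u, F u = G u) -> vRInt F a b = vRInt G a b.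
Proof. intro H. unfold vRInt. f_equal; apply RInt_ext; intros u _; rewrite H; reflexivity. Qed.

Lemma vRInt_opp (F : R -> V3) (a b : R) :
  vex_RInt F a b -> vRInt (fun u => vopp (F u)) a b = vopp (vRInt F a b).
Proof.
  intros (Hx & Hy & Hz).
  unfold vRInt, vopp, vscal, mkV, vx, vy, vz; simpl.
  f_equal; [f_equal|]; rewrite <- (RInt_scal (V := R_CompleteNormedModule)) by assumption;
    reflexivity.
Qed.

Lemma continuity_2d_pt_continuous_snd (f : R -> R -> R) (t u : R) :
  continuity_2d_pt f t u -> continuous (f t) u.
Proof.
  intro Hf. apply (continuous_comp_2 (fun _ => t) (fun v => v) f u).
  - apply continuous_const.
  - apply continuous_id.
  - exact (proj1 (continuity_2d_pt_filterlim f t u) Hf).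
Qed.

Lemma is_RInt_derive_eq (phi phi' : R -> R) (a b : R) :
  (forall v, is_derive phi v (phi' v)) -> (forall v, continuous phi' v) ->
  phi a = phi b -> is_RInt phi' a b 0.
Proof.
  intros Hd Hc Hab.
  replace 0 with (minus (phi b) (phi a)) by (rewrite Hab; unfold minus, plus, opp; simpl; ring).
  apply (is_RInt_derive (V := R_CompleteNormedModule)); auto.
Qed.

Lemma Ap_eq_half_RInt_cross (gamma : R -> R -> V3) (s : R) :
  (forall u, 0 < speed gamma s u) ->
  Ap gamma s = vscal (1/2) (vRInt (fun u => cross (gamma s u) (vpu gamma s u)) 0 (2 * PI)).
Proof.
  intro Hsp. unfold Ap. f_equal. unfold vRInt. f_equal; apply RInt_ext; intros u _;
    generalize (Hsp u); intro Hu;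
    unfold tangent, cross, vscal, mkV, vx, vy, vz; simpl; field; lra.
Qed.

Section Strip.

Variable D : R -> Prop.
Hypothesis D_open : open D.

Definition two_pi_periodic (f : R -> R -> R) : Prop :=
  forall s v, D s -> f s (v + 2 * PI) = f s v.

Lemma locally_2d_strip (t u : R) : D t -> locally_2d (fun s _ => D s) t u.
Proof.
  intro Ht. destruct (D_open t Ht) as [e He].
  exists e. intros s v Hs _. exact (He s Hs).
Qed.

Lemma Ck_on_continuity (k : nat) (f : R -> R -> R) (t u : R) :
  Ck_on D k f -> D t -> continuity_2d_pt f t u.
Proof.
  intros Hf Ht. apply continuity_2d_pt_filterlim.
  destruct k; exact (proj1 Hf t u Ht).
Qed.

Lemma Ck_on_pred (k : nat) (f : R -> R -> R) : Ck_on D (S k) f -> Ck_on D k f.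
Proof.
  revert f; induction k as [|k IH]; intros f (Hc & Hd & Ht & Hu).
  - split; [exact Hc | exact I].
  - split; [exact Hc|]. split; [exact Hd|]. split; [apply IH, Ht | apply IH, Hu].
Qed.

Lemma Ck_on_pt (k : nat) (f : R -> R -> R) : Ck_on D (S k) f -> Ck_on D k (pt f).
Proof. intro Hf; exact (proj1 (proj2 (proj2 Hf))). Qed.

Lemma Ck_on_pu (k : nat) (f : R -> R -> R) : Ck_on D (S k) f -> Ck_on D k (pu f).
Proof. intro Hf; exact (proj2 (proj2 (proj2 Hf))). Qed.

Lemma Ck_on_ex_derive_t (k : nat) (f : R -> R -> R) (t u : R) :
  Ck_on D (S k) f -> D t -> ex_derive (fun s => f s u) t.
Proof. intros Hf Ht. exact (proj1 (proj1 (proj2 Hf) t u Ht)). Qed.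

Lemma Ck_on_ex_derive_u (k : nat) (f : R -> R -> R) (t u : R) :
  Ck_on D (S k) f -> D t -> ex_derive (fun v => f t v) u.
Proof. intros Hf Ht. exact (proj2 (proj1 (proj2 Hf) t u Ht)). Qed.

Lemma pt_pu_comm (f : R -> R -> R) (t u : R) :
  Ck_on D 2 f -> D t -> pt (pu f) t u = pu (pt f) t u.
Proof.
  intros Hf Ht. apply Schwarz.
  - apply (locally_2d_impl (fun s _ => D s)); [|exact (locally_2d_strip t u Ht)].
    apply locally_2d_forall. intros s v Hs.
    split; [exact (Ck_on_ex_derive_t 1 f s v Hf Hs)|].
    split; [exact (Ck_on_ex_derive_u 1 f s v Hf Hs)|].
    split; [exact (Ck_on_ex_derive_t 0 (pu f) s v (Ck_on_pu 1 f Hf) Hs)|].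
    exact (Ck_on_ex_derive_u 0 (pt f) s v (Ck_on_pt 1 f Hf) Hs).
  - exact (Ck_on_continuity 0 _ t u (Ck_on_pt 0 _ (Ck_on_pu 1 f Hf)) Ht).
  - exact (Ck_on_continuity 0 _ t u (Ck_on_pu 0 _ (Ck_on_pt 1 f Hf)) Ht).
Qed.

Lemma pt_periodic (f : R -> R -> R) : two_pi_periodic f -> two_pi_periodic (pt f).
Proof.
  intros Hf t u Ht. unfold pt. apply Derive_ext_loc.
  apply (filter_imp D); [|exact (D_open t Ht)].
  intros s Hs. exact (Hf s u Hs).
Qed.

Ltac continuity_on_strip :=
  repeat first [apply continuity_2d_pt_minus | apply continuity_2d_pt_plus
               | apply continuity_2d_pt_mult];
  solve [eapply Ck_on_continuity; eauto using Ck_on_pt, Ck_on_pu].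

Lemma ex_RInt_strip (h : R -> R -> R) (a b t : R) :
  (forall u, continuity_2d_pt h t u) -> ex_RInt (h t) a b.
Proof.
  intro Hh. apply (ex_RInt_continuous (V := R_CompleteNormedModule)).
  intros u _. exact (continuity_2d_pt_continuous_snd h t u (Hh u)).
Qed.

Lemma ex_RInt_pt_pu (f g : R -> R -> R) (t a b : R) :
  Ck_on D 1 f -> Ck_on D 1 g -> D t ->
  ex_RInt (fun u => pt f t u * pu g t u - pt g t u * pu f t u) a b.
Proof.
  intros Hf Hg Ht.
  apply (ex_RInt_strip (fun s u => pt f s u * pu g s u - pt g s u * pu f s u)).
  intro u. continuity_on_strip.
Qed.

Lemma is_derive_RInt_strip (h h' : R -> R -> R) (a b t : R) :
  (forall s u, D s -> is_derive (fun z => h z u) s (h' s u)) ->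
  (forall s u, D s -> continuity_2d_pt h' s u) ->
  (forall s u, D s -> continuity_2d_pt h s u) -> D t ->
  is_derive (fun s => RInt (h s) a b) t (RInt (h' t) a b).
Proof.
  intros Hd Hc' Hc Ht.
  replace (RInt (h' t) a b) with (RInt (fun u => Derive (fun z => h z u) t) a b)
    by (apply RInt_ext; intros u _; exact (is_derive_unique _ _ _ (Hd t u Ht))).
  apply is_derive_RInt_param.
  - apply (filter_imp D); [|exact (D_open t Ht)].
    intros s Hs u _. exists (h' s u). exact (Hd s u Hs).
  - intros u _. apply (continuity_2d_pt_ext_loc h'); [|exact (Hc' t u Ht)].
    apply (locally_2d_impl (fun s _ => D s)); [|exact (locally_2d_strip t u Ht)].
    apply locally_2d_forall. intros s v Hs.
    symmetry. exact (is_derive_unique _ _ _ (Hd s v Hs)).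
  - apply (filter_imp D); [|exact (D_open t Ht)].
    intros s Hs. apply ex_RInt_strip. intro u. exact (Hc s u Hs).
Qed.

Lemma is_RInt_pu_mult_periodic (f h : R -> R -> R) (t : R) :
  Ck_on D 1 f -> Ck_on D 1 h -> two_pi_periodic f -> two_pi_periodic h -> D t ->
  is_RInt (fun v => pu f t v * h t v + f t v * pu h t v) 0 (2 * PI) 0.
Proof.
  intros Hf Hh Pf Ph Ht.
  apply (is_RInt_derive_eq (fun v => f t v * h t v)).
  - intro v. apply (is_derive_mult (fun v => f t v) (fun v => h t v)).
    + exact (Derive_correct _ _ (Ck_on_ex_derive_u 0 f t v Hf Ht)).
    + exact (Derive_correct _ _ (Ck_on_ex_derive_u 0 h t v Hh Ht)).
    + exact Rmult_comm.
  - intro v.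
    apply (continuity_2d_pt_continuous_snd (fun s v => pu f s v * h s v + f s v * pu h s v)).
    continuity_on_strip.
  - rewrite <- (Rplus_0_l (2 * PI)), (Pf t 0 Ht), (Ph t 0 Ht). reflexivity.
Qed.

Lemma is_derive_RInt_wedge (f g : R -> R -> R) (t : R) :
  Ck_on D 2 f -> Ck_on D 2 g -> two_pi_periodic f -> two_pi_periodic g -> D t ->
  is_derive (fun s => RInt (fun u => f s u * pu g s u - g s u * pu f s u) 0 (2 * PI)) t
    (2 * RInt (fun u => pt f t u * pu g t u - pt g t u * pu f t u) 0 (2 * PI)).
Proof.
  intros Hf Hg Pf Pg Ht.
  set (k := fun u => pt f t u * pu g t u - pt g t u * pu f t u).
  set (h' := fun s u => pt f s u * pu g s u + f s u * pt (pu g) s u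
                        - (pt g s u * pu f s u + g s u * pt (pu f) s u)).
  assert (Dh : is_derive (fun s => RInt (fun u => f s u * pu g s u - g s u * pu f s u) 0 (2 * PI))
                 t (RInt (h' t) 0 (2 * PI))).
  { apply (is_derive_RInt_strip (fun s u => f s u * pu g s u - g s u * pu f s u)).
    - intros s u Hs.
      apply (is_derive_minus (fun z => f z u * pu g z u) (fun z => g z u * pu f z u));
        apply (is_derive_mult (fun z => _ z u) (fun z => pu _ z u)); try exact Rmult_comm;
        apply Derive_correct; eapply Ck_on_ex_derive_t; eauto using Ck_on_pu.
    - intros s u Hs. unfold h'. continuity_on_strip.
    - intros s u Hs. continuity_on_strip.
    - exact Ht. }
  (* [h' = 2 k + d_u (f pt g) - d_u (g pt f)] by Schwarz, and the exact terms integrate to 0. *)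
  assert (Ih : is_RInt (h' t) 0 (2 * PI) (2 * RInt k 0 (2 * PI))).
  { assert (Ik := RInt_correct k 0 (2 * PI)
      (ex_RInt_pt_pu f g t 0 (2 * PI) (Ck_on_pred 1 f Hf) (Ck_on_pred 1 g Hg) Ht)).
    assert (Ifg := is_RInt_pu_mult_periodic f (pt g) t (Ck_on_pred 1 f Hf) (Ck_on_pt 1 g Hg)
      Pf (pt_periodic g Pg) Ht).
    assert (Igf := is_RInt_pu_mult_periodic g (pt f) t (Ck_on_pred 1 g Hg) (Ck_on_pt 1 f Hf)
      Pg (pt_periodic f Pf) Ht).
    assert (I := is_RInt_minus _ _ _ _ _ _
      (is_RInt_plus _ _ _ _ _ _ (is_RInt_scal _ _ _ 2 _ Ik) Ifg) Igf).
    replace (2 * RInt k 0 (2 * PI)) with (minus (plus (scal 2 (RInt k 0 (2 * PI))) 0) 0)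
      by (unfold minus, plus, opp, scal; simpl; unfold mult; simpl; ring).
    eapply is_RInt_ext; [|exact I].
    intros u _; unfold h', k, minus, plus, opp, scal; simpl; unfold mult; simpl.
    rewrite (pt_pu_comm f t u Hf Ht), (pt_pu_comm g t u Hg Ht). ring. }
  rewrite <- (is_RInt_unique _ _ _ _ Ih). exact Dh.
Qed.

Lemma vis_derive_Ap (gamma : R -> R -> V3) (t : R) :
  vsmooth_on D gamma -> (forall s u, D s -> gamma s (u + 2 * PI) = gamma s u) ->
  (forall s u, D s -> 0 < speed gamma s u) -> D t ->
  vis_derive (Ap gamma) t (vRInt (fun u => cross (vpt gamma t u) (vpu gamma t u)) 0 (2 * PI)).
Proof.
  intros (HX & HY & HZ) Hper Hsp Ht.
  assert (PX : two_pi_periodic (fun a b => vx (gamma a b)))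
    by (intros s u Hs; rewrite (Hper s u Hs); reflexivity).
  assert (PY : two_pi_periodic (fun a b => vy (gamma a b)))
    by (intros s u Hs; rewrite (Hper s u Hs); reflexivity).
  assert (PZ : two_pi_periodic (fun a b => vz (gamma a b)))
    by (intros s u Hs; rewrite (Hper s u Hs); reflexivity).
  assert (Hwedge : forall f g, Ck_on D 2 f -> Ck_on D 2 g ->
    two_pi_periodic f -> two_pi_periodic g ->
    is_derive (fun s => 1/2 * RInt (fun u => f s u * pu g s u - g s u * pu f s u) 0 (2 * PI)) t
      (RInt (fun u => pt f t u * pu g t u - pt g t u * pu f t u) 0 (2 * PI))).
  { intros f g Hf Hg Pf Pg.
    set (I := RInt (fun u => pt f t u * pu g t u - pt g t u * pu f t u) 0 (2 * PI)).
    replace I with (scal (1/2) (2 * I)) by (unfold scal; simpl; unfold mult; simpl; field).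
    exact (is_derive_scal _ _ _ _ (is_derive_RInt_wedge f g t Hf Hg Pf Pg Ht)). }
  assert (HA : locally t (fun s => Ap gamma s =
     vscal (1/2) (vRInt (fun u => cross (gamma s u) (vpu gamma s u)) 0 (2 * PI)))).
  { apply (filter_imp D); [|exact (D_open t Ht)].
    intros s Hs. apply Ap_eq_half_RInt_cross. intro u. exact (Hsp s u Hs). }
  split; [|split]; eapply is_derive_ext_loc.
  2: exact (Hwedge _ _ (HY 2%nat) (HZ 2%nat) PY PZ).
  3: exact (Hwedge _ _ (HZ 2%nat) (HX 2%nat) PZ PX).
  4: exact (Hwedge _ _ (HX 2%nat) (HY 2%nat) PX PY).
  all: revert HA; apply filter_imp; intros s ->; reflexivity.
Qed.

Lemma vex_derive_u_vpu (gamma : R -> R -> V3) (t u : R) :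
  vsmooth_on D gamma -> D t -> vex_derive_u (vpu gamma) t u.
Proof.
  intros (HX & HY & HZ) Ht.
  split; [|split]; apply (Ck_on_ex_derive_u 0); auto using Ck_on_pu.
Qed.

Lemma vex_RInt_cross_vpt_vpu (gamma : R -> R -> V3) (t : R) :
  vsmooth_on D gamma -> D t ->
  vex_RInt (fun u => cross (vpt gamma t u) (vpu gamma t u)) 0 (2 * PI).
Proof.
  intros (HX & HY & HZ) Ht.
  split; [|split].
  - exact (ex_RInt_pt_pu (fun a b => vy (gamma a b)) (fun a b => vz (gamma a b)) _ _ _
      (HY 1%nat) (HZ 1%nat) Ht).
  - exact (ex_RInt_pt_pu (fun a b => vz (gamma a b)) (fun a b => vx (gamma a b)) _ _ _
      (HZ 1%nat) (HX 1%nat) Ht).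
  - exact (ex_RInt_pt_pu (fun a b => vx (gamma a b)) (fun a b => vy (gamma a b)) _ _ _
      (HX 1%nat) (HY 1%nat) Ht).
Qed.

End Strip.

Theorem mainTheorem13
  (tbar : R) (gamma : R -> R -> V3) (theta upsilon : R -> R -> R) :
  0 < tbar ->
  (* smooth family of curves and angle functions on the time interval *)
  vsmooth_on (fun t => 0 < t < tbar) gamma ->
  smooth_on (fun t => 0 < t < tbar) theta ->
  (* closed curves: u in S^1 = R / 2 PI Z *)
  (forall t u, 0 <= t < tbar -> gamma t (u + 2 * PI) = gamma t u) ->
  (* regular parametrizations *)
  (forall t u, 0 <= t < tbar -> 0 < speed gamma t u) ->
  (* framed curvature flow *)
  (forall t u, 0 < t < tbar ->
     vpt gamma t u = vscal (curvature gamma t u) (theta_normal gamma theta t u)) ->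
  (forall t u, 0 < t < tbar -> pt theta t u = upsilon t u) ->
  forall t, 0 < t < tbar ->
    vis_derive (Ap gamma) t
      (vopp (vRInt (fun u => vscal (speed gamma t u)
                        (vscal (curvature gamma t u) (theta_binormal gamma theta t u)))
                   0 (2 * PI))).
Proof.
  intros _ Hsmooth _ Hper Hspeed Hflow _ t Ht.
  assert (Hopen : open (fun s => 0 < s < tbar))
    by (apply open_and; [apply open_gt | apply open_lt]).
  rewrite (vRInt_ext _ (fun u => vopp (cross (vpt gamma t u) (vpu gamma t u)))).
  - rewrite vRInt_opp, vopp_involutive by exact (vex_RInt_cross_vpt_vpu _ gamma t Hsmooth Ht).
    apply (vis_derive_Ap _ Hopen gamma t Hsmooth); [| | exact Ht].
    + intros s u Hs. apply Hper. lra.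
    + intros s u Hs. apply Hspeed. lra.
  - intro u. rewrite (cross_vpt_vpu_framed gamma theta t u), vopp_involutive.
    + reflexivity.
    + intro v. apply Hspeed. lra.
    + exact (vex_derive_u_vpu _ gamma t u Hsmooth Ht).
    + exact (Hflow t u Ht).
Qed.
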